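(* Let $0\neq h\in\mathbb{F}[x]$ and regard $A_h\subseteq A_1$ via $x\mapsto x$, $\hat y\mapsto yh$. Then the following are equivalent: (1) $h\in\mathbb{F}^*$; (2) $A_1$ is a Noetherian right $A_h$-module; (3) $A_1$ is a free right $A_h$-module. The same equivalence holds with ''right'' replaced by ''left'' in (2) and (3).
   Context: $\mathbb{F}$ is an arbitrary field. For $h\in\mathbb{F}[x]$, $A_h$ is the unital associative $\mathbb{F}$-algebra generated by $x,\hat y$ with defining relation $\hat yx-x\hat y=h$. $A_1$ is the Weyl algebra, generated by $x,y$ with $yx-xy=1$; for $h\neq 0$, $x\mapsto x,\ \hat y\mapsto yh$ embeds $A_h$ into $A_1$ as a subalgebra. *)

From HB Require Import structures.
From mathcomp Require Import all_boot all_order all_algebra.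
Set Implicit Arguments. Unset Strict Implicit. Unset Printing Implicit Defensive.
Import GRing.Theory.
Local Open Scope ring_scope.

(* The Weyl algebra A_1 over a field F, in normal form:
   an element a : {poly {poly F}} represents  sum_j (a`_j)(x) * y^j,
   with polynomial-in-x coefficients written on the LEFT of powers of y.
   Addition is that of {poly {poly F}}. *)
Notation weyl F := {poly {poly F}}.

Definition wx (F : fieldType) : weyl F := ('X : {poly F})%:P.
Definition wy (F : fieldType) : weyl F := 'X.
Definition wpol (F : fieldType) (p : {poly F}) : weyl F := p%:P.

(* Product of A_1 determined by y x - x y = 1, i.e. in normal form
   (p y^j)(q y^k) = sum_{i<=j} C(j,i) p q^{(i)} y^(j-i+k). *)
Definition wmul (F : fieldType) (a b : weyl F) : weyl F :=
  \sum_(j < size a) \sum_(k < size b) \sum_(i < j.+1)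
    ((a`_j * (b`_k)^`(i) *+ 'C(j, i)) *: 'X^(j - i + k)).

Inductive in_Ah (F : fieldType) (h : {poly F}) : weyl F -> Prop :=
  | Ah_scalar (c : F) : in_Ah h (wpol c%:P)
  | Ah_x : in_Ah h (wx F)
  | Ah_yh : in_Ah h (wmul (wy F) (wpol h))
  | Ah_add a b : in_Ah h a -> in_Ah h b -> in_Ah h (a + b)
  | Ah_mul a b : in_Ah h a -> in_Ah h b -> in_Ah h (wmul a b).

Definition right_submod (F : fieldType) (h : {poly F}) (N : weyl F -> Prop) :=
  [/\ N 0, (forall a b, N a -> N b -> N (a + b))
    & (forall a r, N a -> in_Ah h r -> N (wmul a r))].
Definition left_submod (F : fieldType) (h : {poly F}) (N : weyl F -> Prop) :=
  [/\ N 0, (forall a b, N a -> N b -> N (a + b))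
    & (forall a r, N a -> in_Ah h r -> N (wmul r a))].

Definition acc_cond (F : fieldType) (sub : (weyl F -> Prop) -> Prop) :=
  forall N : nat -> weyl F -> Prop,
    (forall n, sub (N n)) ->
    (forall n a, N n a -> N n.+1 a) ->
    exists n, forall m, (n <= m)%N -> forall a, N m a -> N n a.

Definition noetherian_right (F : fieldType) (h : {poly F}) :=
  acc_cond (right_submod h).
Definition noetherian_left (F : fieldType) (h : {poly F}) :=
  acc_cond (left_submod h).

Definition free_mod (F : fieldType) (h : {poly F})
    (act : weyl F -> weyl F -> weyl F) :=
  exists (I : Type) (e : I -> weyl F),
    (forall a, exists n (idx : 'I_n -> I) (b : 'I_n -> weyl F),
        (forall i, in_Ah h (b i)) /\ a = \sum_(i < n) act (e (idx i)) (b i)) /\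
    (forall n (idx : 'I_n -> I) (b : 'I_n -> weyl F),
        injective idx -> (forall i, in_Ah h (b i)) ->
        \sum_(i < n) act (e (idx i)) (b i) = 0 -> forall i, b i = 0).

Definition free_right (F : fieldType) (h : {poly F}) :=
  free_mod h (fun e b => wmul e b).
Definition free_left (F : fieldType) (h : {poly F}) :=
  free_mod h (fun e b => wmul b e).

Definition nonzero_const (F : fieldType) (h : {poly F}) :=
  exists c : F, c != 0 /\ h = c%:P.

(* Elements of A_1 are stored in normal form sum_j a_j(x) y^j.  We first show
   that left multiplication by a is the differential operator
   f |-> sum_j a_j D^j f, where D f = f' + y f is left multiplication by y;
   this makes the product associative, and a look at top coefficients shows
   that the y-degree is additive, so A_1 is a domain whose units are scalars.
   The key invariant is the h-weight: A_h consists exactly of the elements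
   whose y^j-coefficient is divisible by h^j.
   The module theory is then developed once, for an abstract multiplication
   having the common properties of the product of A_1 and of its opposite
   (right resp. left modules):
   - if h is a scalar, A_h = A_1: A_1 is Noetherian by a leading-coefficient
     argument (F[x] is a PID), and {1} is a basis;
   - the elements of h-weight -n form a chain of submodules which stabilises
     only if h is a scalar;
   - in a basis, comparing coordinates first shows that some basis vector is
     a unit, i.e. a scalar, and then that h divides a nonzero scalar. *)

From mathcomp Require Import all_boot all_order all_algebra.
From mathcomp Require Import zify.
From Stdlib Require Import ClassicalEpsilon.
Set Implicit Arguments. Unset Strict Implicit. Unset Printing Implicit Defensive.
Import GRing.Theory.
Local Open Scope ring_scope.

Section LeftMultiplication.
Variable F : fieldType.
Implicit Types (a b f g : weyl F) (p q : {poly F}).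

Definition xderiv f : weyl F := map_poly (@deriv F) f.

(* Left multiplication by y:  y (p y^k) = p y^(k+1) + p' y^k. *)
Definition ymul f : weyl F := xderiv f + 'X * f.

(* Left multiplication by a = sum_j a_j y^j, as the differential operator
   f |-> sum_j a_j (ymul^j f); we show below that it agrees with wmul a. *)
Definition lmul a f : weyl F := \sum_(j < size a) (a`_j)%:P * iter j ymul f.

Lemma coef_xderiv f i : (xderiv f)`_i = (f`_i)^`().
Proof. by rewrite coef_map_id0 // deriv0. Qed.

Lemma xderivD f g : xderiv (f + g) = xderiv f + xderiv g.
Proof. by apply/polyP=> i; rewrite coefD !coef_xderiv coefD derivD. Qed.

Lemma xderivCM q g : xderiv (q%:P * g) = (q^`())%:P * g + q%:P * xderiv g.
Proof. by apply/polyP=> i; rewrite coefD !coefCM !coef_xderiv coefCM derivM. Qed.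

Lemma ymulD f g : ymul (f + g) = ymul f + ymul g.
Proof. by rewrite /ymul xderivD mulrDr addrACA. Qed.

Lemma ymul_iterD j f g : iter j ymul (f + g) = iter j ymul f + iter j ymul g.
Proof. by elim: j => //= j ->; rewrite ymulD. Qed.

Lemma ymul_iter0 j : iter j ymul 0 = 0.
Proof. by apply: (addrI (iter j ymul 0)); rewrite -ymul_iterD !addr0. Qed.

Lemma ymul_iter_sum j I (r : seq I) (P : pred I) (G : I -> weyl F) :
  iter j ymul (\sum_(i <- r | P i) G i) = \sum_(i <- r | P i) iter j ymul (G i).
Proof. exact: (big_morph _ (@ymul_iterD j) (ymul_iter0 j)). Qed.

Lemma ymulCM q g : ymul (q%:P * g) = (q^`())%:P * g + q%:P * ymul g.
Proof. by rewrite /ymul xderivCM mulrDr -addrA mulrCA. Qed.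

Lemma ymul_iterCM q g j : iter j ymul (q%:P * g) =
  \sum_(i < j.+1) ((q^`(i)) *+ 'C(j, i))%:P * iter (j - i) ymul g.
Proof.
elim: j => [|j IH]; first by rewrite big_ord1 /= bin0 mulr1n.
rewrite iterS IH (big_morph _ ymulD (ymul_iter0 1)).
under eq_bigr do rewrite ymulCM.
rewrite big_split /= [RHS]big_ord_recl /= bin0 mulr1n.
under [X in _ = _ + X]eq_bigr do
  rewrite /bump /= add1n binS mulrnDr polyCD mulrDl subSS.
rewrite big_split /= addrA [LHS]addrC; congr (_ + _); last first.
  by apply: eq_bigr => i _; rewrite derivMn add0n.
rewrite big_ord_recl /= subn0 bin0 mulr1n -iterS; congr (_ + _).
rewrite [RHS]big_ord_recr /= bin_small // mulr0n polyC0 mul0r addr0.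
by apply: eq_bigr => i _; rewrite /bump /= add1n add0n -iterS subnSK.
Qed.

Lemma lmul_bound a f n : (size a <= n)%N ->
  lmul a f = \sum_(j < n) (a`_j)%:P * iter j ymul f.
Proof.
move=> le; rewrite /lmul (big_ord_widen n (fun j => (a`_j)%:P * iter j ymul f) le).
rewrite big_mkcond; apply: eq_bigr => j _; case: ifP => // /negbT.
by rewrite -leqNgt => /(nth_default 0) ->; rewrite mul0r.
Qed.

Lemma lmulDl a1 a2 f : lmul (a1 + a2) f = lmul a1 f + lmul a2 f.
Proof.
pose n := maxn (size a1) (size a2).
have le12 : (size (a1 + a2)%R <= n)%N by rewrite (leq_trans (size_polyD _ _)).
rewrite (lmul_bound f (leq_maxl (size a1) (size a2))).
rewrite (lmul_bound f (leq_maxr (size a1) (size a2))) (lmul_bound f le12).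
rewrite -big_split /=.
by apply: eq_bigr => j _; rewrite coefD polyCD mulrDl.
Qed.

Lemma lmul0l f : lmul 0 f = 0.
Proof. by rewrite /lmul size_poly0 big_ord0. Qed.

Lemma lmulDr a f g : lmul a (f + g) = lmul a f + lmul a g.
Proof. by rewrite /lmul -big_split; apply: eq_bigr => j _; rewrite ymul_iterD mulrDr. Qed.

Lemma lmul0r a : lmul a 0 = 0.
Proof. by rewrite /lmul big1 // => j _; rewrite ymul_iter0 mulr0. Qed.

Lemma lmul_suml I (r : seq I) (P : pred I) (G : I -> weyl F) f :
  lmul (\sum_(i <- r | P i) G i) f = \sum_(i <- r | P i) lmul (G i) f.
Proof. exact: (big_morph (lmul^~ f) (fun a b => lmulDl a b f) (lmul0l f)). Qed.

Lemma lmul_monomial c m f : lmul (c *: 'X^m) f = c%:P * iter m ymul f.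
Proof.
rewrite (lmul_bound _ (size_scale_leq _ _ )) size_polyXn.
rewrite (bigD1 (Ordinal (ltnSn m))) //= coefZ coefXn eqxx mulr1 big1 ?addr0 //.
move=> j /negbTE nj; rewrite coefZ coefXn.
have -> : (nat_of_ord j == m) = false.
  by apply: contraFF nj => /eqP e; apply/eqP/val_inj.
by rewrite mulr0 mul0r.
Qed.

Lemma lmul_wmul a b f : lmul (wmul a b) f = lmul a (lmul b f).
Proof.
rewrite /wmul lmul_suml [in RHS]/lmul; apply: eq_bigr => j _.
rewrite lmul_suml ymul_iter_sum mulr_sumr; apply: eq_bigr => k _.
rewrite lmul_suml ymul_iterCM mulr_sumr; apply: eq_bigr => i _.
by rewrite lmul_monomial mulrA -polyCM -iterD mulrnAr addnC.
Qed.

Lemma ymul_iter1 j : iter j ymul 1 = 'X^j :> weyl F.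
Proof.
elim: j => [|j IH] //=; rewrite IH /ymul exprS addrC (_ : xderiv _ = 0) ?addr0 //.
apply/polyP=> i; rewrite coef_xderiv coefXn coef0.
by case: (i == j); rewrite ?derivC ?deriv0.
Qed.

Lemma lmul1r a : lmul a 1 = a.
Proof.
rewrite /lmul; under eq_bigr do rewrite ymul_iter1 mul_polyC.
by rewrite -poly_def coefK.
Qed.

Lemma wmulE a b : wmul a b = lmul a b.
Proof. by rewrite -[LHS]lmul1r lmul_wmul lmul1r. Qed.
End LeftMultiplication.

Section WeylRing.
Variable F : fieldType.
Implicit Types (a b c f g : weyl F) (p q : {poly F}).

(* A_1 is associative and biadditive, being a ring of operators. *)
Lemma wmulA a b c : wmul (wmul a b) c = wmul a (wmul b c).
Proof. by rewrite [LHS]wmulE lmul_wmul !wmulE. Qed.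

Lemma wmulDl a b c : wmul (a + b) c = wmul a c + wmul b c.
Proof. by rewrite !wmulE lmulDl. Qed.

Lemma wmulDr a b c : wmul a (b + c) = wmul a b + wmul a c.
Proof. by rewrite !wmulE lmulDr. Qed.

Lemma wmulCl p b : wmul (wpol p) b = p%:P * b.
Proof.
rewrite wmulE /lmul; have [->|nz] := eqVneq p 0.
  by rewrite size_poly0 big_ord0 mul0r.
by rewrite size_polyC nz big_ord1 coefC eqxx.
Qed.

Lemma wmul_scalarr (k : F) b : wmul b (wpol k%:P) = k%:P%:P * b.
Proof.
have ymul_scal j f : iter j (@ymul F) (k%:P%:P * f) = k%:P%:P * iter j (@ymul F) f.
  by elim: j => //= j ->; rewrite ymulCM derivC polyC0 mul0r add0r.
rewrite wmulE -[in RHS](lmul1r b) /lmul mulr_sumr; apply: eq_bigr => j _.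
by rewrite -[wpol _]mulr1 ymul_scal mulrCA.
Qed.

Lemma ymul_top f e : (size f <= e.+1)%N ->
  (size (ymul f) <= e.+2)%N /\ (ymul f)`_e.+1 = f`_e.
Proof.
have coef_ymul i : (ymul f)`_i = (f`_i)^`() + (if i == 0%N then 0 else f`_i.-1).
  by rewrite coefD coef_xderiv coefXM.
move=> /leq_sizeP sf; split; last by rewrite coef_ymul sf // deriv0 add0r.
apply/leq_sizeP => i hi; rewrite coef_ymul sf ?deriv0 ?add0r; last exact: ltnW.
by case: i hi => // i hi; apply: sf.
Qed.

Lemma ymul_iter_top f e j : (size f <= e.+1)%N ->
  (size (iter j (@ymul F) f) <= (e + j).+1)%N /\
  (iter j (@ymul F) f)`_(e + j) = f`_e.
Proof.
move=> sf; elim: j => [|j [IH1 IH2]]; first by rewrite addn0.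
by have [h1 h2] := ymul_top IH1; rewrite /= addnS h2 IH2.
Qed.

Lemma lmul_top a f d e : (size a <= d.+1)%N -> (size f <= e.+1)%N ->
  (size (lmul a f) <= (d + e).+1)%N /\ (lmul a f)`_(d + e) = a`_d * f`_e.
Proof.
move=> sa sf; rewrite (lmul_bound _ sa); split.
  rewrite (leq_trans (size_sum _ _ _)) //; apply/bigmax_leqP => j _.
  rewrite mul_polyC (leq_trans (size_scale_leq _ _)) //.
  have [h1 _] := ymul_iter_top j sf.
  by rewrite (leq_trans h1) // ltnS addnC leq_add2r -ltnS.
rewrite coef_sum big_ord_recr /= coefCM.
have [_ top] := ymul_iter_top d sf; rewrite addnC top.
rewrite big1 ?add0r // => j _; rewrite coefCM.
have [h1 _] := ymul_iter_top j sf.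
by rewrite addnC (leq_sizeP _ _ h1) ?mulr0 // [(d + e)%N]addnC ltn_add2l.
Qed.

Lemma lmul_lead a f : a != 0 -> f != 0 ->
  size (lmul a f) = (size a + size f).-1 /\
  lead_coef (lmul a f) = lead_coef a * lead_coef f.
Proof.
move=> a0 f0.
have pa : (0 < size a)%N by rewrite size_poly_gt0.
have pf : (0 < size f)%N by rewrite size_poly_gt0.
have sa : (size a <= (size a).-1.+1)%N by rewrite prednK.
have sf : (size f <= (size f).-1.+1)%N by rewrite prednK.
have [s1 s2] := lmul_top sa sf.
have nz : a`_(size a).-1 * f`_(size f).-1 != 0.
  by rewrite mulf_neq0 // -/(lead_coef _) lead_coef_eq0.
have e : size (lmul a f) = ((size a).-1 + (size f).-1).+1.
  apply/eqP; rewrite eqn_leq s1 /=; apply: contraR nz; rewrite -ltnNge ltnS => h.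
  by rewrite -s2; apply/eqP/(leq_sizeP _ _ h).
rewrite /lead_coef e /= s2; split => //.
by move: pa pf; case: (size a) (size f) => [|m] [|n] //= _ _; rewrite addnS.
Qed.

Lemma wmul_eq0 a b : wmul a b = 0 -> a = 0 \/ b = 0.
Proof.
move=> ab; have [->|a0] := eqVneq a 0; first by left.
have [->|b0] := eqVneq b 0; first by right.
have [s _] := lmul_lead a0 b0; move: s; rewrite -wmulE ab size_poly0.
have : (0 < size a)%N by rewrite size_poly_gt0.
have : (0 < size b)%N by rewrite size_poly_gt0.
lia.
Qed.

Lemma wmul_unit a b : wmul a b = 1 ->
  (exists c : F, c != 0 /\ a = wpol c%:P) /\ (exists c : F, c != 0 /\ b = wpol c%:P).
Proof.
move=> ab.
have a0 : a != 0 by apply: contra_eq_neq ab => ->; rewrite wmulE lmul0l eq_sym oner_neq0.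
have b0 : b != 0 by apply: contra_eq_neq ab => ->; rewrite wmulE lmul0r eq_sym oner_neq0.
have [s _] := lmul_lead a0 b0; rewrite -wmulE ab size_poly1 in s.
have pa : (0 < size a)%N by rewrite size_poly_gt0.
have pb : (0 < size b)%N by rewrite size_poly_gt0.
have /size_poly1P[p p0 ea] : size a == 1%N by apply/eqP; lia.
have /size_poly1P[q q0 eb] : size b == 1%N by apply/eqP; lia.
move: ab; rewrite ea eb -[p%:P]/(wpol p) wmulCl -polyCM -polyC1 => /polyC_inj pq.
have scalar_of_unit r : r \is a GRing.unit -> exists c : F, c != 0 /\ r%:P = wpol c%:P.
  rewrite poly_unitE => /andP[/size_poly1P[c c0 ->] _]; by exists c.
split; apply: scalar_of_unit; apply/unitrPr; first by exists q.
by exists p; rewrite mulrC.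
Qed.
End WeylRing.

Section HWeight.
Variables (F : fieldType) (h : {poly F}).
Implicit Types (a b f g : weyl F) (p q : {poly F}).

(* a has h-weight P - M: for every j, h^(j + P - M) divides the coefficient of
   y^j (with truncated subtraction).  A_h will be the elements of weight 0, and
   y has weight -1 (P = 0, M = 1). *)
Definition hweight a (P M : nat) := forall j, h ^+ (j + P - M) %| a`_j.

Lemma dvdp_derivn n i p : h ^+ n %| p -> h ^+ (n - i) %| p^`(i).
Proof.
elim: i => [|i IH] hp; first by rewrite subn0 derivn0.
rewrite derivnS subnS; case: (n - i)%N (IH hp) => [|m] /=.
  by rewrite expr0 !dvd1p.
case/dvdpP => q ->; rewrite derivM deriv_exp /= dvdp_add //.
  by rewrite dvdp_mull // exprS dvdp_mulIr.
by rewrite dvdp_mull // -mulr_natr dvdp_mulr // dvdp_mulIr.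
Qed.

Lemma hweight_sum I (r : seq I) (Q : pred I) (G : I -> weyl F) P M :
  (forall i, Q i -> hweight (G i) P M) -> hweight (\sum_(i <- r | Q i) G i) P M.
Proof.
move=> hG j; rewrite coef_sum.
apply: (big_ind (fun x => h ^+ (j + P - M) %| x)); first exact: dvdp0.
  by move=> x y; apply: dvdp_add.
by move=> i /hG.
Qed.

Lemma hweight_add a b P M : hweight a P M -> hweight b P M -> hweight (a + b) P M.
Proof. by move=> ha hb j; rewrite coefD dvdp_add. Qed.

Lemma hweight_opp a P M : hweight a P M -> hweight (- a) P M.
Proof. by move=> ha j; rewrite coefN dvdpNr. Qed.

Lemma hweight_monomial p m P M : h ^+ (m + P - M) %| p -> hweight (p *: 'X^m) P M.
Proof.
move=> hp j; rewrite coefZ coefXn; case: eqP => [->|_]; first by rewrite mulr1.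
by rewrite mulr0 dvdp0.
Qed.

Lemma hweight_pol p P M : h ^+ (P - M) %| p -> hweight (wpol p) P M.
Proof.
by move=> hp; rewrite /wpol -[p%:P]mulr1 mul_polyC -(expr0 'X); apply: hweight_monomial.
Qed.

Lemma hweight_y : hweight (wy F) 0 1.
Proof.
rewrite /wy -['X]scale1r -[X in _ *: X]expr1.
by apply: hweight_monomial; rewrite expr0 dvd1p.
Qed.

(* Weights add under multiplication (Leibniz formula and dvdp_derivn). *)
Lemma hweight_wmul a b P1 M1 P2 M2 : hweight a P1 M1 -> hweight b P2 M2 ->
  hweight (wmul a b) (P1 + P2) (M1 + M2).
Proof.
move=> ha hb; apply: hweight_sum => j _; apply: hweight_sum => k _.
apply: hweight_sum => i _; apply: hweight_monomial.
rewrite -mulr_natr dvdp_mulr //.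
apply: dvdp_trans (dvdp_mul (ha j) (dvdp_derivn i (hb k))).
by rewrite -exprD dvdp_exp2l //; have := ltn_ord i; lia.
Qed.

Lemma hweight_mono a P M P' M' : (P' + M <= P + M')%N -> hweight a P M -> hweight a P' M'.
Proof. by move=> le ha j; apply: dvdp_trans (ha j); rewrite dvdp_exp2l //; lia. Qed.
End HWeight.

Section AhByWeight.
Variables (F : fieldType) (h : {poly F}).
Hypothesis hnz : h != 0.
Implicit Types (a b f g : weyl F) (p q : {poly F}).

Lemma Ah0 : in_Ah h 0.
Proof. by have := Ah_scalar h 0; rewrite /wpol !polyC0. Qed.

Lemma Ah_opp a : in_Ah h a -> in_Ah h (- a).
Proof.
move=> ha; have := Ah_mul (Ah_scalar h (-1)) ha.
by rewrite wmulCl !(polyCN, polyC1) mulN1r.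
Qed.

Lemma Ah_sum I (r : seq I) (Q : pred I) (G : I -> weyl F) :
  (forall i, Q i -> in_Ah h (G i)) -> in_Ah h (\sum_(i <- r | Q i) G i).
Proof. by move=> hG; apply: (big_ind (in_Ah h)) => //; [exact: Ah0 | exact: Ah_add]. Qed.

Lemma Ah_pol p : in_Ah h (wpol p).
Proof.
have Ah_Xn n : in_Ah h (wpol 'X^n).
  elim: n => [|n IH]; first by rewrite expr0 -polyC1; apply: Ah_scalar.
  by have := Ah_mul IH (Ah_x h); rewrite wmulCl /wx /wpol -polyCM exprSr.
rewrite -(coefK p) poly_def /wpol raddf_sum /=; apply: Ah_sum => i _.
by have := Ah_mul (Ah_scalar h p`_i) (Ah_Xn i); rewrite wmulCl -polyCM mul_polyC.
Qed.

Lemma Ah_hweight a : in_Ah h a -> hweight h a 0 0.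
Proof.
elim=> {a} [c||||a b _ ha _ hb]; last exact: (hweight_wmul ha hb).
- by apply: hweight_pol; rewrite expr0 dvd1p.
- by apply: hweight_pol; rewrite expr0 dvd1p.
- apply: (@hweight_mono _ _ _ 1 1) => //; apply: (hweight_wmul (hweight_y h)).
  by apply: hweight_pol; rewrite expr1.
- by move=> a b _ ha _ hb; apply: hweight_add.
Qed.

Fixpoint yh_pow (d : nat) : weyl F :=
  if d is d'.+1 then wmul (yh_pow d') (wmul (wy F) (wpol h)) else 1.

Lemma Ah_yh_pow d : in_Ah h (yh_pow d).
Proof.
elim: d => [|d IH] /=; last exact: Ah_mul IH (Ah_yh h).
by rewrite -[1]/(wpol 1) -polyC1; apply: Ah_scalar.
Qed.

Lemma yh_pow_lead d : size (yh_pow d) = d.+1 /\ lead_coef (yh_pow d) = h ^+ d.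
Proof.
have y0 : wy F != 0 by rewrite /wy polyX_eq0.
have h0 : wpol h != 0 by rewrite /wpol polyC_eq0.
have [syh lyh] : size (wmul (wy F) (wpol h)) = 2%N /\ lead_coef (wmul (wy F) (wpol h)) = h.
  have [s l] := lmul_lead y0 h0; rewrite wmulE s l /wy /wpol.
  by rewrite size_polyX size_polyC hnz lead_coefX lead_coefC mul1r.
elim: d => [|d [s l]] /=; first by rewrite size_poly1 lead_coef1 expr0.
have n0 : yh_pow d != 0 by rewrite -size_poly_eq0 s.
have yh0 : wmul (wy F) (wpol h) != 0 by rewrite -size_poly_eq0 syh.
have [s' l'] := lmul_lead n0 yh0.
by rewrite wmulE s' l' s syh l lyh addn2 exprSr.
Qed.

(* Conversely every element of h-weight 0 lies in A_h: subtract g (y h)^d to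
   kill the leading term h^d g, and induct on the y-degree. *)
Lemma hweight_Ah r : hweight h r 0 0 -> in_Ah h r.
Proof.
elim: {r}(size r) {-2}r (leqnn (size r)) => [|n IH] r sr wr.
  by move: sr; rewrite leqn0 size_poly_eq0 => /eqP ->; apply: Ah0.
have [->|r0] := eqVneq r 0; first exact: Ah0.
pose d := (size r).-1.
have sr' : size r = d.+1 by rewrite /d prednK // size_poly_gt0.
have /divpK gh : h ^+ d %| lead_coef r by have := wr d; rewrite addn0 subn0.
pose t := wmul (wpol (lead_coef r %/ h ^+ d)) (yh_pow d).
have [ys yl] := yh_pow_lead d.
have g0 : lead_coef r %/ h ^+ d != 0.
  by apply: contraNneq r0 => g0; rewrite -lead_coef_eq0 -gh g0 mul0r.
have ts : size t = d.+1 by rewrite /t wmulCl mul_polyC size_scale ?ys // polyC_eq0.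
have tl : t`_d = r`_d.
  have Yd : (yh_pow d)`_d = h ^+ d by rewrite -yl /lead_coef ys.
  by rewrite /t wmulCl coefCM Yd gh.
have At : in_Ah h t by apply: Ah_mul (Ah_pol _) (Ah_yh_pow d).
rewrite -(subrK t r); apply: Ah_add => //; apply: IH; last first.
  by apply: hweight_add wr (hweight_opp (Ah_hweight At)).
rewrite -ltnS (leq_trans _ sr) // sr' ltnS; apply/leq_sizeP => j hj.
rewrite coefB; have [<-|hj'] := eqVneq d j; first by rewrite tl subrr.
by rewrite !nth_default ?subrr // ?ts ?sr' // ltn_neqAle hj' hj.
Qed.

Lemma Ah_hweightE a : in_Ah h a <-> hweight h a 0 0.
Proof. by split; [exact: Ah_hweight | exact: hweight_Ah]. Qed.
End AhByWeight.

Lemma ex_minP (Q : nat -> Prop) k : Q k -> exists m, Q m /\ forall k', Q k' -> (m <= k')%N.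
Proof.
move=> Qk; pose q n : bool := excluded_middle_informative (Q n).
have qP n : reflect (Q n) (q n).
  by rewrite /q; case: excluded_middle_informative => /= H; constructor.
have exq : exists n, q n by exists k; apply/qP.
by case: (ex_minnP exq) => m /qP Qm minm; exists m; split=> // k' /qP /minm.
Qed.

Definition monotone2 (Q : nat -> nat -> Prop) :=
  forall n n' k k', (n <= n')%N -> (k <= k')%N -> Q n k -> Q n' k'.

(* A doubly monotone predicate stabilises in n: take n witnessing the least
   k reachable at all. *)
Lemma monotone2_stable Q : monotone2 Q ->
  exists N, forall n, (N <= n)%N -> forall k, Q n k -> Q N k.
Proof.
move=> mono; have [[n1 [k1 q1]]|none] := classic (exists n k, Q n k); last first.
  by exists 0%N => n _ k q; case: none; exists n, k.
have [k0 [[n0 q0] mink]] := @ex_minP (fun k => exists n, Q n k) k1 (ex_intro _ n1 q1).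
by exists n0 => n _ k q; apply: mono q0 => //; apply: mink; exists n.
Qed.

Lemma monotone2_stable_below (P : nat -> nat -> nat -> Prop) D :
  (forall d, monotone2 (P d)) ->
  exists N, forall d, (d < D)%N -> forall n, (N <= n)%N -> forall k, P d n k -> P d N k.
Proof.
move=> mono; elim: D => [|D [N1 IH]]; first by exists 0%N.
have [N2 H2] := monotone2_stable (mono D).
exists (maxn N1 N2) => d; rewrite ltnS leq_eqVlt => /orP [/eqP->|ltdD] n le k p.
  apply: (mono D N2 _ k k (leq_maxr _ _) (leqnn k)); apply: H2 p.
  exact: leq_trans (leq_maxr _ _) le.
apply: (mono d N1 _ k k (leq_maxl _ _) (leqnn k)); apply: IH p => //.
exact: leq_trans (leq_maxl _ _) le.
Qed.

(* A predicate monotone in three arguments stabilises in the middle one: for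
   d beyond the degree d0 of a witness of the least reachable k, every
   instance already holds at the witness n0; the finitely many d < d0 are
   handled by monotone2_stable_below. *)
Lemma monotone3_stable (P : nat -> nat -> nat -> Prop) :
  (forall d d' n n' k k', (d <= d')%N -> (n <= n')%N -> (k <= k')%N ->
     P d n k -> P d' n' k') ->
  exists N, forall n, (N <= n)%N -> forall d k, P d n k -> P d N k.
Proof.
move=> mono; have [[d1 [n1 [k1 p1]]]|none] := classic (exists d n k, P d n k); last first.
  by exists 0%N => n _ d k p; case: none; exists d, n, k.
have [k0 [[d0 [n0 p0]] mink]] :=
  @ex_minP (fun k => exists d n, P d n k) k1 (ex_intro _ d1 (ex_intro _ n1 p1)).
have [N1 H1] := @monotone2_stable_below P d0 (fun d n n' k k' => mono d d n n' k k' (leqnn d)).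
exists (maxn n0 N1) => n le d k p; case: (ltnP d d0) => ltdd0.
  apply: (mono d d N1 _ k k) (H1 d ltdd0 n _ k p) => //; first by rewrite leq_maxr.
  exact: leq_trans (leq_maxr _ _) le.
apply: (mono d0 d n0 _ k0 k) p0 => //; first by rewrite leq_maxl.
by apply: mink; exists d, n.
Qed.

Section PolyIdeal.
Variable F : fieldType.

Definition poly_ideal (A : {poly F} -> Prop) :=
  [/\ A 0, (forall p q, A p -> A q -> A (p + q)) & (forall p q, A p -> A (p * q))].

(* F[x] is a PID: if A is contained in the ideal B and every nonzero element
   of B is matched by a nonzero element of A of no larger size, then B = A,
   since a minimal-size nonzero g in A divides every element of B. *)
Lemma poly_ideal_sub (A B : {poly F} -> Prop) : poly_ideal A -> poly_ideal B ->
  (forall p, A p -> B p) ->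
  (forall p, B p -> p != 0 -> exists q, [/\ A q, q != 0 & (size q <= size p)%N]) ->
  forall p, B p -> A p.
Proof.
move=> [A0 _ AM] [_ BD BM] AB small p Bp; have [->|p0] := eqVneq p 0; first exact: A0.
have [q0 Aq0] := small p Bp p0.
have [k [[g [Ag g0 sg]] ming]] := @ex_minP
  (fun k => exists q, [/\ A q, q != 0 & (size q <= k)%N]) _ (ex_intro _ q0 Aq0).
suff pg : p %% g = 0 by rewrite (divp_eq p g) pg addr0 mulrC; apply: AM.
apply/eqP; apply: contraT => r0.
have Br : B (p %% g).
  have -> : p %% g = p + g * - (p %/ g).
    by rewrite mulrN mulrC [X in X - _](divp_eq p g) addrAC subrr add0r.
  by apply: BD Bp (BM _ _ (AB g Ag)).
have := ming _ (small _ Br r0); have := ltn_modp p g; rewrite g0 => ltrg.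
by rewrite leqNgt (leq_trans ltrg sg).
Qed.
End PolyIdeal.

Lemma dvdp_scalar_const (F : fieldType) (h : {poly F}) (c : F) :
  c != 0 -> h %| c%:P -> nonzero_const h.
Proof.
move=> c0 hc; have /dvdp_leq/(_ hc) : c%:P != 0 by rewrite polyC_eq0.
rewrite size_polyC c0 => sh.
have h0 : h != 0 by apply: contraTneq hc => ->; rewrite dvd0p polyC_eq0.
have /size_poly1P[k k0 ->] : size h == 1%N by rewrite eqn_leq sh lt0n size_poly_eq0.
by exists k.
Qed.

Lemma const_Ah (F : fieldType) (h : {poly F}) : nonzero_const h -> forall a, in_Ah h a.
Proof.
move=> [c [c0 ->]] a; have hnz : c%:P != 0 by rewrite polyC_eq0.
apply/(Ah_hweightE hnz) => j; rewrite addn0 subn0 -rmorphXn.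
apply/dvdpP; exists ((c ^+ j)^-1%:P * a`_j).
by rewrite mulrC mulrA -polyCM mulfV ?mul1r // expf_neq0.
Qed.

Lemma chain_incl (T : Type) (N : nat -> T -> Prop) :
  (forall n a, N n a -> N n.+1 a) -> forall n n', (n <= n')%N -> forall a, N n a -> N n' a.
Proof.
move=> inc n n' /subnK <-; elim: (n' - n)%N => // k IH a /IH.
by rewrite addSn; apply: inc.
Qed.

(* The properties of a multiplication on A_1 used by the module theory below.
   They hold for the product of A_1, giving right A_h-modules, and for the
   opposite product, giving left A_h-modules. *)
Record weyl_mul (F : fieldType) := WeylMul {
  wm :> weyl F -> weyl F -> weyl F;
  wmA : forall a b c : weyl F, wm (wm a b) c = wm a (wm b c);
  wmDl : forall a b c : weyl F, wm (a + b) c = wm a c + wm b c;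
  wmDr : forall a b c : weyl F, wm a (b + c) = wm a b + wm a c;
  wm_scalarl : forall (k : F) (a : weyl F), wm (wpol k%:P) a = k%:P%:P * a;
  wm_scalarr : forall (k : F) (a : weyl F), wm a (wpol k%:P) = k%:P%:P * a;
  wm_eq0 : forall a b : weyl F, wm a b = 0 -> a = 0 \/ b = 0;
  wm_unit : forall a b : weyl F, wm a b = 1 -> exists k : F, k != 0 /\ a = wpol k%:P;
  wm_hweight : forall (h : {poly F}) (a b : weyl F) P1 M1 P2 M2,
    hweight h a P1 M1 -> hweight h b P2 M2 -> hweight h (wm a b) (P1 + P2) (M1 + M2);
  wm_top_pol : forall (a : weyl F) (p : {poly F}) d, (size a <= d.+1)%N ->
    (size (wm a (wpol p)) <= d.+1)%N /\ (wm a (wpol p))`_d = a`_d * p;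
  wm_top_y : forall (a : weyl F) d, (size a <= d.+1)%N ->
    (size (wm a (wy F)) <= d.+2)%N /\ (wm a (wy F))`_d.+1 = a`_d
}.

Section OneSided.
Variables (F : fieldType) (mul : weyl_mul F).
Implicit Types (a b c f g r : weyl F) (p q : {poly F}) (N : weyl F -> Prop).

Lemma wm1l a : mul 1 a = a.
Proof. by have := wm_scalarl mul 1 a; rewrite /wpol !polyC1 mul1r. Qed.

Lemma wm0l a : mul 0 a = 0.
Proof. by have := wm_scalarl mul 0 a; rewrite /wpol !polyC0 mul0r. Qed.

Lemma wm0r a : mul a 0 = 0.
Proof. by have := wm_scalarr mul 0 a; rewrite /wpol !polyC0 mul0r. Qed.

Lemma wmNl a b : mul (- a) b = - mul a b.
Proof. by apply/eqP; rewrite -addr_eq0 -wmDl addNr wm0l. Qed.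

Lemma wmNr a b : mul a (- b) = - mul a b.
Proof. by apply/eqP; rewrite -addr_eq0 -wmDr addNr wm0r. Qed.

Lemma wm_suml I (s : seq I) (P : pred I) (G : I -> weyl F) b :
  mul (\sum_(i <- s | P i) G i) b = \sum_(i <- s | P i) mul (G i) b.
Proof. exact: (big_morph (mul^~ b) (fun x y => wmDl mul x y b) (wm0l b)). Qed.

Lemma wm_sumr I (s : seq I) (P : pred I) (G : I -> weyl F) a :
  mul a (\sum_(i <- s | P i) G i) = \sum_(i <- s | P i) mul a (G i).
Proof. exact: (big_morph (mul a) (wmDr mul a) (wm0r a)). Qed.

(* A_h is closed under mul, by the weight characterisation of A_h. *)
Lemma wm_Ah h a b : h != 0 -> in_Ah h a -> in_Ah h b -> in_Ah h (mul a b).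
Proof.
by move=> hnz /(Ah_hweightE hnz) ha /(Ah_hweightE hnz) hb;
  apply/(Ah_hweightE hnz); apply: (wm_hweight mul ha hb).
Qed.

Definition submod h N :=
  [/\ N 0, (forall a b, N a -> N b -> N (a + b))
    & (forall a r, N a -> in_Ah h r -> N (mul a r))].

(* When h is a scalar, submodules are one-sided ideals of A_1 for mul. *)
Definition ideal N :=
  [/\ N 0, (forall a b, N a -> N b -> N (a + b)) & (forall a r, N a -> N (mul a r))].

Definition lead_ideal N d p := exists a, [/\ N a, (size a <= d.+1)%N & a`_d = p].

Lemma ideal_opp N a : ideal N -> N a -> N (- a).
Proof.
case=> _ _ NM Na; have := NM _ (wpol (-1)%:P) Na.
by rewrite wm_scalarr !(polyCN, polyC1) mulN1r.
Qed.

Lemma lead_ideal_poly_ideal N d : ideal N -> poly_ideal (lead_ideal N d).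
Proof.
case=> N0 ND NM; split.
- by exists 0; rewrite size_poly0 coef0.
- move=> _ _ [a [Na sa <-]] [b [Nb sb <-]]; exists (a + b); rewrite coefD.
  by split=> //; [apply: ND | rewrite (leq_trans (size_polyD _ _)) // geq_max sa].
- move=> _ q [a [Na sa <-]]; have [s c] := wm_top_pol mul q sa.
  by exists (mul a (wpol q)); split=> //; apply: NM.
Qed.

(* Multiplying by y moves leading coefficients from degree d to degree d + 1. *)
Lemma lead_ideal_shift N d d' p : ideal N -> (d <= d')%N ->
  lead_ideal N d p -> lead_ideal N d' p.
Proof.
case=> _ _ NM /subnK <-; elim: (d' - d)%N => // k IH /IH [a [Na sa <-]].
by have [s c] := wm_top_y mul sa; exists (mul a (wy F)); split=> //; apply: NM.
Qed.

(* An ideal is determined by its leading coefficients: if N is contained in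
   N' with the same leading ideals, then N = N' (induction on the degree,
   subtracting from a in N' an element of N with the same leading term). *)
Lemma ideal_sub_of_lead N N' : ideal N -> ideal N' -> (forall a, N a -> N' a) ->
  (forall d p, lead_ideal N' d p -> lead_ideal N d p) -> forall a, N' a -> N a.
Proof.
move=> iN iN' NN' lead a; have [N0 ND _] := iN.
elim: {a}(size a) {-2}a (leqnn (size a)) => [|n IH] a sa N'a.
  by move: sa; rewrite leqn0 size_poly_eq0 => /eqP ->.
have [->//|a0] := eqVneq a 0.
pose d := (size a).-1; have sa' : size a = d.+1 by rewrite prednK // size_poly_gt0.
have [b [Nb sb bd]] : lead_ideal N d a`_d by apply: lead; exists a; rewrite sa'.
rewrite -(subrK b a); apply: (ND _ _ _ Nb); apply: IH; last first.
  by have [_ N'D _] := iN'; apply: N'D N'a (ideal_opp iN' (NN' _ Nb)).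
rewrite -ltnS (leq_trans _ sa) // sa' ltnS; apply/leq_sizeP => j hj; rewrite coefB.
have [<-|hj'] := eqVneq d j; first by rewrite bd subrr.
by rewrite !nth_default ?subrr // ?(leq_trans sb) ?sa' // ltn_neqAle hj' hj.
Qed.

(* In an ascending chain of ideals the leading ideals stabilise uniformly in d:
   "the chain has a nonzero leading coefficient of size <= k in degree d at
   step n" is monotone in (d, n, k), and F[x] is a PID. *)
Lemma chain_lead_stable (Nc : nat -> weyl F -> Prop) :
  (forall n, ideal (Nc n)) -> (forall n a, Nc n a -> Nc n.+1 a) ->
  exists M, forall n, (M <= n)%N -> forall d p, lead_ideal (Nc n) d p -> lead_ideal (Nc M) d p.
Proof.
move=> iN inc; pose P d n k := exists p, [/\ lead_ideal (Nc n) d p, p != 0 & (size p <= k)%N].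
have [M stable] : exists M, forall n, (M <= n)%N -> forall d k, P d n k -> P d M k.
  apply: monotone3_stable => d d' n n' k k' dd' nn' kk' [p [lp p0 sp]].
  exists p; split=> //; last exact: leq_trans kk'.
  apply: lead_ideal_shift (iN n') dd' _; case: lp => a [Na sa ad].
  by exists a; split=> //; apply: chain_incl nn' _ Na.
exists M => n le d; apply: poly_ideal_sub; try exact: lead_ideal_poly_ideal.
  by move=> p [a [Na sa ad]]; exists a; split=> //; apply: chain_incl le _ Na.
move=> p lp p0; have [q [lq q0 sq]] := stable n le d (size p) (ex_intro _ p (And3 lp p0 (leqnn _))).
by exists q.
Qed.

Lemma ideal_acc (Nc : nat -> weyl F -> Prop) :
  (forall n, ideal (Nc n)) -> (forall n a, Nc n a -> Nc n.+1 a) ->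
  exists n, forall m, (n <= m)%N -> forall a, Nc m a -> Nc n a.
Proof.
move=> iN inc; have [M stable] := chain_lead_stable iN inc.
exists M => n le; apply: ideal_sub_of_lead (iN M) (iN n) _ (stable n le).
exact: chain_incl le.
Qed.

(* If h is a scalar, submodules are ideals, so A_1 is Noetherian over A_h. *)
Lemma const_noetherian h : nonzero_const h -> acc_cond (submod h).
Proof.
move=> hc Nc sub; apply: ideal_acc => n; case: (sub n) => N0 ND NM.
by split=> // a r Na; apply: NM Na (const_Ah hc r).
Qed.

Lemma hweight_submod h n : h != 0 -> submod h (fun a => hweight h a 0 n).
Proof.
move=> hnz; split; first by move=> j; rewrite coef0 dvdp0.
  by move=> a b; apply: hweight_add.
move=> a r wa /(Ah_hweightE hnz) wr; have := wm_hweight mul wa wr.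
by rewrite !addn0.
Qed.

(* y^(n+1) has weight -(n+1) but not -n unless h is a scalar, so the chain
   of hweight_submod never stabilises. *)
Lemma noetherian_const h : h != 0 -> acc_cond (submod h) -> nonzero_const h.
Proof.
move=> hnz acc; have [|n stable] := acc _ (fun n => hweight_submod n hnz).
  by move=> n a; apply: hweight_mono; rewrite !add0n.
have wX : hweight h ('X^(n.+1) : weyl F) 0 n.+1.
  by rewrite -['X^_]scale1r; apply: hweight_monomial; rewrite addn0 subnn expr0 dvd1p.
have := stable n.+1 (leqnSn n) _ wX n.+1; rewrite coefXn eqxx addn0 subSnn expr1.
exact: dvdp_scalar_const (oner_neq0 F).
Qed.

Lemma const_free h : nonzero_const h -> free_mod h mul.
Proof.
move=> hc; exists unit, (fun _ => 1); split.
  move=> a; exists 1%N, (fun _ => tt), (fun _ => a).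
  by rewrite big_ord1 wm1l; split=> // _; apply: const_Ah.
move=> n idx b inj _ sum0 i; rewrite -sum0 (bigD1 i) //= wm1l big1 ?addr0 // => j /negP[].
by apply/eqP/inj; case: (idx j); case: (idx i).
Qed.

Section FreeBasis.
Variables (h : {poly F}) (I : Type) (e : I -> weyl F).
Hypothesis hnz : h != 0.
Hypothesis span : forall a, exists n (idx : 'I_n -> I) (b : 'I_n -> weyl F),
  (forall i, in_Ah h (b i)) /\ a = \sum_(i < n) mul (e (idx i)) (b i).
Hypothesis indep : forall n (idx : 'I_n -> I) (b : 'I_n -> weyl F),
  injective idx -> (forall i, in_Ah h (b i)) ->
  \sum_(i < n) mul (e (idx i)) (b i) = 0 -> forall i, b i = 0.

(* A finite expansion is a list of pairs (basis vector, coefficient in A_h);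
   the coordinate of v collects the coefficients of the pairs with vector v. *)
Definition expansion (s : seq (weyl F * weyl F)) :=
  forall u, u \in s -> (exists i, e i = u.1) /\ in_Ah h u.2.
Definition combo (s : seq (weyl F * weyl F)) := \sum_(u <- s) mul u.1 u.2.
Definition coord (s : seq (weyl F * weyl F)) v := \sum_(u <- s | u.1 == v) u.2.

Lemma expansion_exists a : exists s, expansion s /\ a = combo s.
Proof.
have [n [idx [b [hb ->]]]] := span a.
exists [seq (e (idx t), b t) | t <- index_enum 'I_n]; split; last by rewrite /combo big_map.
by move=> u /mapP [t _ ->]; split; [exists (idx t) | apply: hb].
Qed.

Lemma coord_Ah s v : expansion s -> in_Ah h (coord s v).
Proof. by move=> hs; rewrite /coord big_seq_cond; apply: Ah_sum => u /andP[/hs[]]. Qed.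

Lemma combo_coord s : combo s = \sum_(v <- undup (map fst s)) mul v (coord s v).
Proof.
transitivity (\sum_(u <- s) \sum_(v <- undup (map fst s)) if u.1 == v then mul u.1 u.2 else 0).
  apply: eq_big_seq => u us.
  have uk : u.1 \in undup (map fst s) by rewrite mem_undup map_f.
  rewrite (bigD1_seq u.1) ?undup_uniq //= eqxx big1 ?addr0 // => v.
  by rewrite eq_sym => /negbTE ->.
rewrite exchange_big; apply: eq_bigr => v _; rewrite /coord wm_sumr [RHS]big_mkcond.
by apply: eq_bigr => u _; case: eqP => // ->.
Qed.

Lemma coord_eq0 s : expansion s -> combo s = 0 -> forall v, coord s v = 0.
Proof.
move=> hs s0 v; pose keys := undup (map fst s).
have ex (k : 'I_(size keys)) : exists i, e i = keys`_k.
  have : keys`_k \in keys by apply: mem_nth.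
  by rewrite mem_undup => /mapP [u /hs [[i ei] _] ->]; exists i.
pose idx k := proj1_sig (constructive_indefinite_description _ (ex k)).
have eidx k : e (idx k) = keys`_k by rewrite /idx; case: constructive_indefinite_description.
have inj : injective idx.
  move=> k1 k2 ek; apply/val_inj/eqP.
  by rewrite -(nth_uniq 0 (ltn_ord k1) (ltn_ord k2) (undup_uniq _)) -!eidx ek.
have zero := indep inj (fun k => coord_Ah keys`_k hs).
case vk: (v \in keys).
  have ik : (index v keys < size keys)%N by rewrite index_mem vk.
  rewrite -(nth_index 0 vk) -[index v keys]/(nat_of_ord (Ordinal ik)) zero //.
  apply: etrans s0; rewrite combo_coord (big_nth 0) big_mkord.
  by apply: eq_bigr => k _; rewrite eidx.
apply: big1_seq => u /andP [/eqP uv us].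
by move: vk; rewrite mem_undup -uv map_f.
Qed.

Lemma coord_compare s r c i0 : expansion s -> in_Ah h r -> in_Ah h c ->
  mul (combo s) r = mul (e i0) c ->
  forall v, mul (coord s v) r = if v == e i0 then c else 0.
Proof.
move=> hs hr hc eq_rc v; pose s' := [seq (u.1, mul u.2 r) | u <- s] ++ [:: (e i0, - c)].
have hs' : expansion s'.
  move=> u; rewrite mem_cat inE => /orP [/mapP [w /hs [ex hw] ->]|/eqP ->] /=.
    by split=> //; apply: wm_Ah.
  by split; [exists i0 | apply: Ah_opp].
have s'0 : combo s' = 0.
  rewrite /combo big_cat big_map big_cons big_nil /= addr0 wmNr.
  by under eq_bigr do rewrite -wmA; rewrite -wm_suml -/(combo s) eq_rc subrr.
have := coord_eq0 hs' s'0 v.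
rewrite /coord big_cat big_map big_cons big_nil /= addr0 -wm_suml -/(coord s v).
have [->|_] := eqVneq v (e i0); first by move/eqP; rewrite subr_eq0 => /eqP.
by rewrite addr0.
Qed.

Lemma Ah1 : in_Ah h 1.
Proof. by have := Ah_scalar h 1; rewrite /wpol !polyC1. Qed.

(* Some basis vector is right-invertible: write 1 = sum_i e_i b_i and pick a
   vector e0 occurring in it.  The element r = e0 h^N (N the y-size of e0) lies
   in A_h, so comparing 1 r = e0 h^N coordinatewise kills every coordinate of
   1 except the one at e0, whence 1 = e0 b with b the coordinate at e0. *)
Lemma basis_unit : exists i0 b, mul (e i0) b = 1.
Proof.
have [s [hs s1]] := expansion_exists 1.
have [u us] : exists u, u \in s.
  case: s s1 {hs} => [|u s] s1; last by exists u; rewrite mem_head.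
  by move/eqP: s1; rewrite /combo big_nil oner_eq0.
have [[i0 ei0] _] := hs u us.
have e0 : e i0 != 0.
  apply/eqP => ez; have hs1 : expansion [:: (e i0, 1)].
    by move=> w; rewrite inE => /eqP ->; split; [exists i0 | exact: Ah1].
  have := coord_eq0 hs1 _ (e i0); rewrite /combo /coord !big_cons !big_nil /= eqxx.
  by rewrite !addr0 ez wm0l => /(_ erefl)/eqP; rewrite oner_eq0.
pose N := size (e i0); pose r := mul (e i0) (wpol (h ^+ N)).
have rAh : in_Ah h r.
  apply/(Ah_hweightE hnz)/(@hweight_mono _ _ _ (0 + N) (N + 0)); first by rewrite addn0.
  apply: wm_hweight; last by apply: hweight_pol; rewrite subn0.
  move=> j; case: (ltnP j N) => jN; last by rewrite nth_default ?dvdp0.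
  by rewrite addn0 (eqP (ltnW jN : (j <= N)%N)) expr0 dvd1p.
have r0 : r != 0.
  apply/eqP => /wm_eq0[/eqP|/eqP]; first by rewrite (negPf e0).
  by rewrite /wpol polyC_eq0 expf_eq0 (negPf hnz) andbF.
have coord1 v : v != e i0 -> coord s v = 0.
  move=> /negPf nv; have := coord_compare hs rAh (@Ah_pol _ h (h ^+ N)) (i0 := i0) _ v.
  rewrite -s1 wm1l nv => /(_ erefl)/wm_eq0[] // r0'.
  by move: r0; rewrite r0' eqxx.
exists i0, (coord s (e i0)); rewrite s1 combo_coord (bigD1_seq (e i0)) ?undup_uniq //=.
  by rewrite big1 ?addr0 // => v /coord1 ->; rewrite wm0r.
by rewrite mem_undup ei0 map_f.
Qed.

(* By basis_unit some e_i0 is a unit, hence a scalar k.  Then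
   y h = e_i0 (k^-1 y h) with k^-1 y h in A_h, so comparing with an expansion
   y = sum_i e_i d_i multiplied by h shows that the coordinate of y at e_i0 is
   k^-1 y; lying in A_h, its y-coefficient k^-1 is divisible by h, so h is a
   nonzero scalar. *)
Lemma basis_const : nonzero_const h.
Proof.
have [i0 [b eb]] := basis_unit; have [k [k0 ek]] := wm_unit eb.
pose z := mul (wy F) (wpol h).
have zAh : in_Ah h z.
  apply/(Ah_hweightE hnz)/(@hweight_mono _ _ _ (0 + 1) (1 + 0)) => //.
  by apply: wm_hweight (hweight_y h) _; apply: hweight_pol; rewrite expr1.
pose w := mul (wpol k^-1%:P) z.
have ew : mul (e i0) w = z.
  by rewrite ek /w !wm_scalarl mulrA -!polyCM mulfV // !polyC1 mul1r.
have wAh : in_Ah h w by apply: wm_Ah hnz (Ah_pol _ _) zAh.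
have [s [hs sy]] := expansion_exists (wy F).
have := coord_compare hs (@Ah_pol _ h h) wAh (i0 := i0) _ (e i0).
rewrite -sy ew eqxx /w -wmA => /(_ erefl)/eqP; rewrite -subr_eq0 -wmNl -wmDl.
move=> /eqP/wm_eq0[/eqP|/eqP]; last by rewrite /wpol polyC_eq0 (negPf hnz).
rewrite subr_eq0 wm_scalarl => /eqP ecoord.
have /(Ah_hweightE hnz)/(_ 1%N) := coord_Ah (e i0) hs.
rewrite ecoord coefCM coefX mulr1 expr1; apply: dvdp_scalar_const.
by rewrite invr_eq0.
Qed.
End FreeBasis.

Lemma free_const h : h != 0 -> free_mod h mul -> nonzero_const h.
Proof. by move=> hnz [I [e [span indep]]]; apply: (basis_const hnz span indep). Qed.

Theorem one_sided_equiv h : h != 0 ->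
  (nonzero_const h <-> acc_cond (submod h)) /\ (nonzero_const h <-> free_mod h mul).
Proof.
move=> hnz; split; split; [exact: const_noetherian | exact: noetherian_const |
  exact: const_free | exact: free_const].
Qed.
End OneSided.

Section Instances.
Variable F : fieldType.
Implicit Types (a b c : weyl F) (p : {poly F}).

Lemma wmul_top_polr a p d : (size a <= d.+1)%N ->
  (size (wmul a (wpol p)) <= d.+1)%N /\ (wmul a (wpol p))`_d = a`_d * p.
Proof.
move=> sa; rewrite wmulE; have [s c] := lmul_top sa (size_polyC_leq1 p).
by rewrite addn0 in s c; rewrite c coefC eqxx.
Qed.

Lemma wmul_top_yr a d : (size a <= d.+1)%N ->
  (size (wmul a (wy F)) <= d.+2)%N /\ (wmul a (wy F))`_d.+1 = a`_d.
Proof.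
move=> sa; rewrite wmulE; have sy : (size (wy F) <= 2)%N by rewrite size_polyX.
by have [s c] := lmul_top sa sy; rewrite addn1 in s c; rewrite c coefX mulr1.
Qed.

Lemma wmul_top_poll a p d : (size a <= d.+1)%N ->
  (size (wmul (wpol p) a) <= d.+1)%N /\ (wmul (wpol p) a)`_d = a`_d * p.
Proof.
move=> sa; rewrite wmulCl coefCM [p * _]mulrC; split=> //.
by rewrite mul_polyC (leq_trans (size_scale_leq _ _)).
Qed.

Lemma wmul_top_yl a d : (size a <= d.+1)%N ->
  (size (wmul (wy F) a) <= d.+2)%N /\ (wmul (wy F) a)`_d.+1 = a`_d.
Proof.
move=> sa; rewrite wmulE; have sy : (size (wy F) <= 2)%N by rewrite size_polyX.
by have [s c] := lmul_top sy sa; rewrite add1n in s c; rewrite c coefX mul1r.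
Qed.

Definition right_mul : weyl_mul F :=
  @WeylMul F (@wmul F) (@wmulA F) (@wmulDl F) (@wmulDr F)
    (fun k a => wmulCl k%:P a) (@wmul_scalarr F) (@wmul_eq0 F)
    (fun a b ab => (wmul_unit ab).1) (@hweight_wmul F)
    wmul_top_polr wmul_top_yr.

Definition left_mul : weyl_mul F.
Proof.
refine (@WeylMul F (fun a b => wmul b a) _ _ _ _ _ _ _ _ wmul_top_poll wmul_top_yl).
- by move=> a b c; rewrite wmulA.
- by move=> a b c; rewrite wmulDr.
- by move=> a b c; rewrite wmulDl.
- exact: wmul_scalarr.
- by move=> k a; rewrite wmulCl.
- by move=> a b /wmul_eq0[]; [right | left].
- by move=> a b /wmul_unit[].
- by move=> h a b P1 M1 P2 M2 ha hb; rewrite addnC [(M1 + _)%N]addnC; apply: hweight_wmul.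
Defined.
End Instances.

Unset Implicit Arguments.

Theorem corollary4p5 (F : fieldType) (h : {poly F}) (hnz : h != 0) :
  [/\ (nonzero_const h <-> noetherian_right h),
      (nonzero_const h <-> free_right h),
      (nonzero_const h <-> noetherian_left h)
    & (nonzero_const h <-> free_left h)].
Proof.
have [noeth_r free_r] := one_sided_equiv (right_mul F) hnz.
have [noeth_l free_l] := one_sided_equiv (left_mul F) hnz.
by split.
Qed.
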